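(* Let $r\ge2$, $\alpha_1,\dots,\alpha_r>0$, $m\ge1$, $f(z)=\mathrm{sgn}(z)\frac{|z|^m}{1+|z|^m}$, and consider $\dot x_1=f(x_r)-\alpha_1x_1$, $\dot x_j=x_{j-1}-\alpha_jx_j$ ($2\le j\le r$). Let $\phi=\prod_{i=1}^r\alpha_i$, $h(z)=f(z)/z$ for $z\ne0$, and $\mathcal{V}_0=(\prod_{i=2}^r\alpha_i,\prod_{i=3}^r\alpha_i,\dots,\alpha_r,1)^T$. Let $z\neq0$ with $h(z)=\phi$ (so that $z\mathcal{V}_0$ is an equilibrium). If $z>0$, then $z\mathcal{V}_0$ is asymptotically stable when $h'(z)<0$ and unstable when $h'(z)>0$. If $z<0$, then $z\mathcal{V}_0$ is asymptotically stable when $h'(z)>0$ and unstable when $h'(z)<0$.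
   Context: Unstable means not Lyapunov stable. An equilibrium $p$ is asymptotically stable if there is a neighborhood $N$ of $p$ such that solutions starting in $N$ converge to $p$ uniformly in the initial point in $N$. *)

From Stdlib Require Import Reals Lra.
From Coquelicot Require Import Coquelicot.
Open Scope R_scope.

Definition sgn (z : R) : R :=
  if Rlt_dec 0 z then 1 else if Rlt_dec z 0 then -1 else 0.

(* f(z) = sgn(z) |z|^m / (1 + |z|^m)  (real exponent m; for z = 0 the
   factor sgn 0 = 0 makes f 0 = 0 regardless of Rpower's value at 0) *)
Definition fhill (m z : R) : R :=
  sgn z * Rpower (Rabs z) m / (1 + Rpower (Rabs z) m).

Definition hfun (m z : R) : R := fhill m z / z.

Fixpoint prodR (a : nat -> R) (k n : nat) : R :=
  match n with
  | O => 1
  | S n' => a k * prodR a (S k) n'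
  end.

(* States are x : nat -> R; component j (0 <= j < r) stands for x_{j+1}. *)
Definition vfield (r : nat) (alpha : nat -> R) (m : R) (x : nat -> R)
  (j : nat) : R :=
  match j with
  | O => fhill m (x (r - 1)%nat) - alpha O * x O
  | S j' => x j' - alpha j * x j
  end.

Definition phi (r : nat) (alpha : nat -> R) : R := prodR alpha 0 r.

(* V0_j = prod_{i = j+2}^{r} alpha_i (1-indexed), i.e. with 0-indexed
   component j: product of alpha (j+1), ..., alpha (r-1). *)
Definition V0 (r : nat) (alpha : nat -> R) (j : nat) : R :=
  prodR alpha (S j) (r - 1 - j).

Definition is_solution (r : nat) (alpha : nat -> R) (m : R)
  (x : R -> nat -> R) : Prop :=
  forall t, 0 <= t -> forall j, (j < r)%nat ->
    is_derive (fun s => x s j) t (vfield r alpha m (x t) j).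

Definition lyap_stable (r : nat) (alpha : nat -> R) (m : R)
  (p : nat -> R) : Prop :=
  forall eps, 0 < eps -> exists delta, 0 < delta /\
    forall x, is_solution r alpha m x ->
      (forall j, (j < r)%nat -> Rabs (x 0 j - p j) < delta) ->
      forall t, 0 <= t -> forall j, (j < r)%nat -> Rabs (x t j - p j) < eps.

Definition unstable (r : nat) (alpha : nat -> R) (m : R)
  (p : nat -> R) : Prop := ~ lyap_stable r alpha m p.

Definition asymp_stable (r : nat) (alpha : nat -> R) (m : R)
  (p : nat -> R) : Prop :=
  exists delta, 0 < delta /\
    forall eps, 0 < eps -> exists T,
      forall x, is_solution r alpha m x ->
        (forall j, (j < r)%nat -> Rabs (x 0 j - p j) < delta) ->
        forall t, T <= t -> forall j, (j < r)%nat -> Rabs (x t j - p j) < eps.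

From Stdlib Require Import Reals Lra Lia Classical Factorial.
From Coquelicot Require Import Coquelicot.
Open Scope R_scope.

(* Write a solution as x = z V0 + q.  The deviation solves the cascade
     q_1' = g(q_r) - alpha_1 q_1,   q_j' = q_{j-1} - alpha_j q_j,   g(u) = f(z+u) - f(z),
   whose feedback gain c = f'(z) = phi + z h'(z) is nonnegative since f is nondecreasing;
   the sign conditions on h'(z) say exactly c < phi (stable case) or c > phi (unstable case).
   For a small mu > 0 the shifted rates a_i = alpha_i -+ mu keep prod a_i on the same side of
   c as phi, and with the weights W_j = 1 / (a_2 ... a_j) the barriers
   |q_j| < W_j K exp(-mu t), resp. q_j > W_j K exp(mu t), cannot be crossed first by any
   component: there it is compared with a scalar linear equation.  The first barrier gives
   uniform exponential convergence.  The second pushes every solution started in the positive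
   weighted cone out of a fixed neighbourhood; such solutions exist because the vector field
   is globally Lipschitz (Picard iteration). *)

Lemma continuous_of_is_derive (f : R -> R) (t l : R) : is_derive f t l -> continuous f t.
Proof. intros H. apply (@ex_derive_continuous R_AbsRing R_NormedModule). exists l; exact H. Qed.

Lemma continuous_eps_delta (g : R -> R) (t : R) :
  continuous g t <->
  forall eps, 0 < eps -> exists d, 0 < d /\ forall s, Rabs (s - t) < d -> Rabs (g s - g t) < eps.
Proof.
  split.
  - intros Hc%continuity_pt_filterlim eps He. destruct (Hc eps He) as [d [Hd H]].
    exists d; split; [lra|]. intros s Hs.
    destruct (Req_dec s t) as [->|Hne].
    + rewrite Rminus_diag, Rabs_R0; lra.
    + apply (H s). split; [split; [exact I|congruence]| exact Hs].
  - intros H. apply continuity_pt_filterlim. intros eps He.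
    destruct (H eps He) as [d [Hd Hd']].
    exists d. split; [lra|]. intros s [_ Hs]. apply Hd'. exact Hs.
Qed.

Lemma lipschitz_continuous (g : R -> R) (M : R) :
  (forall u v, Rabs (g u - g v) <= M * Rabs (u - v)) -> forall t, continuous g t.
Proof.
  intros H t. apply continuous_eps_delta. intros eps He.
  assert (HM : 0 < Rabs M + 1) by (pose proof (Rabs_pos M); lra).
  exists (eps / (Rabs M + 1)). split; [apply Rdiv_lt_0_compat; lra|].
  intros s Hs. apply Rlt_div_r in Hs; [|lra].
  eapply Rle_lt_trans; [apply H|].
  pose proof (Rle_abs M). pose proof (Rabs_pos (s - t)). nra.
Qed.

Lemma continuous_Rmax0 (t : R) : continuous (Rmax 0) t.
Proof.
  apply (lipschitz_continuous _ 1). intros u v. rewrite Rmult_1_l.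
  pose proof (Rle_abs (u - v)). pose proof (Rle_abs (v - u)) as Hvu. rewrite Rabs_minus_sym in Hvu.
  apply Rabs_le.
  unfold Rmax; destruct (Rle_dec 0 u); destruct (Rle_dec 0 v); split; lra.
Qed.

Lemma exp_le_compat (x y : R) : x <= y -> exp x <= exp y.
Proof.
  intros H. destruct (Rle_lt_or_eq_dec _ _ H) as [Hl| ->]; [left; apply exp_increasing; auto| lra].
Qed.

Lemma exp_neg_mul_one_plus_le1 (x : R) : exp (- x) * (1 + x) <= 1.
Proof.
  pose proof (exp_ineq1_le x). pose proof (exp_pos (- x)).
  assert (exp (- x) * exp x = 1) by (rewrite <- exp_plus, Rplus_opp_l; apply exp_0).
  nra.
Qed.

Lemma nondecreasing_of_derive_ge0 (v dv : R -> R) (t1 : R) : 0 <= t1 ->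
  (forall s, 0 <= s <= t1 -> is_derive v s (dv s)) ->
  (forall s, 0 <= s <= t1 -> 0 <= dv s) -> v 0 <= v t1.
Proof.
  intros Ht Hd Hp.
  destruct (MVT_gen v 0 t1 dv) as [c [Hc He]].
  - intros x Hx. rewrite Rmin_left, Rmax_right in Hx by lra. apply Hd; lra.
  - intros x Hx. rewrite Rmin_left, Rmax_right in Hx by lra.
    apply continuity_pt_filterlim, (continuous_of_is_derive _ _ (dv x)), Hd; lra.
  - rewrite Rmin_left, Rmax_right in Hc by lra.
    assert (0 <= dv c) by (apply Hp; lra). nra.
Qed.

Lemma is_derive_ge0_of_right_nondecreasing (f : R -> R) (z c : R) : is_derive f z c ->
  (exists del, 0 < del /\ forall h, 0 < h < del -> f z <= f (z + h)) -> 0 <= c.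
Proof.
  intros Hd [del [Hdel Hm]]. apply is_derive_Reals in Hd.
  destruct (Rle_dec 0 c) as [|Hc]; [auto|exfalso].
  destruct (Hd (- c) ltac:(lra)) as [[dl Hdl0] Hdl]. simpl in Hdl.
  set (h := Rmin (del / 2) (dl / 2)).
  assert (Hh : 0 < h) by (apply Rmin_glb_lt; lra).
  assert (Hh1 : h < del) by (pose proof (Rmin_l (del / 2) (dl / 2)); unfold h; lra).
  assert (Hh2 : h < dl) by (pose proof (Rmin_r (del / 2) (dl / 2)); unfold h; lra).
  specialize (Hdl h ltac:(lra) ltac:(rewrite Rabs_right; lra)).
  specialize (Hm h ltac:(lra)).
  assert (0 <= (f (z + h) - f z) / h) by (apply Rdiv_le_0_compat; lra).
  apply Rabs_def2 in Hdl. lra.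
Qed.

Lemma is_derive_increment_le (f : R -> R) (z c c' : R) : is_derive f z c -> Rabs c < c' ->
  exists eta, 0 < eta /\ forall u, Rabs u <= eta -> Rabs (f (z + u) - f z) <= c' * Rabs u.
Proof.
  intros Hd Hcc. apply is_derive_Reals in Hd.
  destruct (Hd (c' - Rabs c) ltac:(lra)) as [[dl Hdl0] Hdl]. simpl in Hdl.
  exists (dl / 2). split; [lra|].
  intros u Hu. destruct (Req_dec u 0) as [->|Hu0].
  - rewrite Rplus_0_r, Rminus_diag, !Rabs_R0. lra.
  - specialize (Hdl u Hu0 ltac:(lra)).
    replace (f (z + u) - f z) with ((f (z + u) - f z) / u * u) by (field; auto).
    rewrite Rabs_mult. apply Rmult_le_compat_r; [apply Rabs_pos|].
    pose proof (Rabs_triang_inv ((f (z + u) - f z) / u) c). lra.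
Qed.

Lemma is_derive_increment_ge (f : R -> R) (z c c' : R) : is_derive f z c -> c' < c ->
  exists eta, 0 < eta /\ forall u, 0 <= u <= eta -> c' * u <= f (z + u) - f z.
Proof.
  intros Hd Hcc. apply is_derive_Reals in Hd.
  destruct (Hd (c - c') ltac:(lra)) as [[dl Hdl0] Hdl]. simpl in Hdl.
  exists (dl / 2). split; [lra|].
  intros u Hu. destruct (Req_dec u 0) as [->|Hu0].
  - rewrite Rplus_0_r, Rminus_diag. lra.
  - specialize (Hdl u Hu0 ltac:(rewrite Rabs_right by lra; lra)).
    apply Rabs_def2 in Hdl.
    replace (f (z + u) - f z) with ((f (z + u) - f z) / u * u) by (field; auto).
    apply Rmult_le_compat_r; lra.
Qed.

Lemma exists_common_delta (n : nat) (P : nat -> R -> Prop) :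
  (forall j d d', P j d -> 0 < d' <= d -> P j d') ->
  (forall j, (j < n)%nat -> exists d, 0 < d /\ P j d) ->
  exists d, 0 < d /\ forall j, (j < n)%nat -> P j d.
Proof.
  intros Hmon. induction n as [|n IH]; intros H.
  - exists 1; split; [lra| intros; lia].
  - destruct IH as [d1 [Hd1 H1]]; [intros j Hj; apply H; lia|].
    destruct (H n ltac:(lia)) as [d2 [Hd2 H2]].
    assert (Hmin : 0 < Rmin d1 d2) by (apply Rmin_glb_lt; lra).
    exists (Rmin d1 d2). split; [exact Hmin|].
    intros j Hj. destruct (Nat.eq_dec j n) as [->|Hne].
    + apply Hmon with d2; [exact H2|]. split; [exact Hmin| apply Rmin_r].
    + apply Hmon with d1; [apply H1; lia|]. split; [exact Hmin| apply Rmin_l].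
Qed.

Lemma exists_upper_bound (w : nat -> R) (n : nat) :
  exists M, 0 < M /\ forall j, (j < n)%nat -> w j <= M.
Proof.
  induction n as [|n [M [HM H]]].
  - exists 1; split; [lra|intros; lia].
  - exists (Rmax M (w n)). split; [pose proof (Rmax_l M (w n)); lra|].
    intros j Hj. destruct (Nat.eq_dec j n) as [->|]; [apply Rmax_r|].
    pose proof (Rmax_l M (w n)). specialize (H j ltac:(lia)). lra.
Qed.

Lemma exists_pos_lower_bound (w : nat -> R) (n : nat) :
  (forall j, (j < n)%nat -> 0 < w j) -> exists M, 0 < M /\ forall j, (j < n)%nat -> M <= w j.
Proof.
  induction n as [|n IH]; intros Hp.
  - exists 1; split; [lra|intros; lia].
  - destruct IH as [M [HM H]]; [intros; apply Hp; lia|].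
    exists (Rmin M (w n)). split; [apply Rmin_glb_lt; auto|].
    intros j Hj. destruct (Nat.eq_dec j n) as [->|]; [apply Rmin_r|].
    pose proof (Rmin_l M (w n)). specialize (H j ltac:(lia)). lra.
Qed.

Lemma continuous_le0_of_lt0_before (g : R -> R) (T : R) : 0 < T -> continuous g T ->
  (forall s, 0 <= s < T -> g s < 0) -> g T <= 0.
Proof.
  intros HT Hc Hbelow. destruct (Rle_dec (g T) 0) as [|Hp]; [auto|exfalso].
  destruct (proj1 (continuous_eps_delta _ _) Hc (g T) ltac:(lra)) as [d [Hd Hd']].
  set (s := Rmax 0 (T - d / 2)).
  assert (Hs : 0 <= s < T) by (unfold s; split; [apply Rmax_l| apply Rmax_lub_lt; lra]).
  assert (Hsd : Rabs (s - T) < d).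
  { unfold s. apply Rabs_def1; unfold Rmax; destruct (Rle_dec 0 (T - d / 2)); lra. }
  specialize (Hd' s Hsd). specialize (Hbelow s Hs). apply Rabs_def2 in Hd'. lra.
Qed.

Lemma continuous_lt0_near (n : nat) (g : nat -> R -> R) (T : R) :
  (forall j, (j < n)%nat -> continuous (g j) T) -> (forall j, (j < n)%nat -> g j T < 0) ->
  exists d, 0 < d /\ forall s j, Rabs (s - T) < d -> (j < n)%nat -> g j s < 0.
Proof.
  intros Hc Hneg.
  destruct (exists_common_delta n (fun j d => forall s, Rabs (s - T) < d -> g j s < 0))
    as [d [Hd Hd']].
  { intros j d d' Hj Hdd s Hs. apply Hj. lra. }
  { intros j Hj. specialize (Hneg j Hj).
    destruct (proj1 (continuous_eps_delta _ _) (Hc j Hj) (- g j T) ltac:(lra)) as [d [Hd Hd']].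
    exists d; split; [exact Hd|]. intros s Hs. specialize (Hd' s Hs). apply Rabs_def2 in Hd'. lra. }
  exists d. split; [exact Hd|]. intros s j Hs Hj. exact (Hd' j Hj s Hs).
Qed.

(* The supremum of the times up to which all [g j] stay negative cannot be finite. *)
Lemma continuous_induction (n : nat) (g : nat -> R -> R) :
  (forall j t, (j < n)%nat -> 0 <= t -> continuous (g j) t) ->
  (forall j, (j < n)%nat -> g j 0 < 0) ->
  (forall t1, 0 <= t1 -> (forall s j, 0 <= s <= t1 -> (j < n)%nat -> g j s <= 0) ->
     forall j, (j < n)%nat -> g j t1 < 0) ->
  forall t j, 0 <= t -> (j < n)%nat -> g j t < 0.
Proof.
  intros Hc H0 Hstep t j Ht Hj.
  destruct (Rlt_dec (g j t) 0) as [Hlt|Hge]; [exact Hlt|exfalso].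
  set (E := fun u => 0 <= u /\ forall s k, 0 <= s <= u -> (k < n)%nat -> g k s < 0).
  assert (HE0 : E 0).
  { split; [lra|]. intros s k Hs Hk. replace s with 0 by lra. apply H0; exact Hk. }
  destruct (completeness E) as [T [HT1 HT2]].
  { exists t. intros u [Hu Hu']. destruct (Rle_dec u t) as [|Hn]; [auto|].
    exfalso. specialize (Hu' t j ltac:(lra) Hj). lra. }
  { exists 0; exact HE0. }
  assert (HT0 : 0 <= T) by (apply HT1; exact HE0).
  assert (Hbelow : forall s k, 0 <= s < T -> (k < n)%nat -> g k s < 0).
  { intros s k Hs Hk.
    destruct (classic (exists u, E u /\ s < u)) as [[u [[_ Hu] Hsu]]|Hno].
    - apply Hu; [lra|exact Hk].
    - exfalso. assert (T <= s); [|lra]. apply HT2. intros u Hu.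
      destruct (Rle_dec u s) as [|Hn]; [auto|]. exfalso; apply Hno; exists u; split; [auto|lra]. }
  assert (HTle : forall s k, 0 <= s <= T -> (k < n)%nat -> g k s <= 0).
  { intros s k Hs Hk. destruct (Rlt_dec s T) as [Hl|Hl]; [left; apply Hbelow; auto; lra|].
    replace s with T by lra.
    destruct (Req_dec T 0) as [->|HTn]; [left; apply H0; exact Hk|].
    apply continuous_le0_of_lt0_before; [lra| apply Hc; auto|]. intros; apply Hbelow; auto. }
  destruct (continuous_lt0_near n g T (fun k Hk => Hc k T Hk HT0) (Hstep T HT0 HTle))
    as [d [Hd Hd']].
  assert (E (T + d / 2)).
  { split; [lra|]. intros s k Hs Hk. destruct (Rlt_dec s T) as [Hl|Hl].
    - apply Hbelow; auto; lra.
    - apply Hd'; [apply Rabs_def1; lra| exact Hk]. }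
  specialize (HT1 _ H). lra.
Qed.

(** * Comparison for scalar linear equations *)

Lemma is_derive_exp_mul (u : R -> R) (a s l : R) : is_derive u s l ->
  is_derive (fun s => exp (a * s) * u s) s (exp (a * s) * (l + a * u s)).
Proof.
  intros Hu.
  assert (He : is_derive (fun s => exp (a * s)) s (a * exp (a * s))) by (auto_derive; auto; ring).
  replace (exp (a * s) * (l + a * u s))
    with (plus (mult (a * exp (a * s)) (u s)) (mult (exp (a * s)) l))
    by (unfold plus, mult; simpl; ring).
  exact (is_derive_mult _ _ _ _ _ He Hu Rmult_comm).
Qed.

(* Integrating-factor comparison for [u' = F - a u]: the signs of [b] and [W] are free. *)
Lemma linear_ode_exp_barrier (u F : R -> R) (a nu b W K t1 : R) :
  0 <= t1 -> 0 < a + nu -> 0 < K ->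
  (forall s, 0 <= s <= t1 -> is_derive u s (F s - a * u s)) ->
  (forall s, 0 <= s <= t1 -> F s <= b * K * exp (nu * s)) ->
  u 0 < W * K -> b <= W * (a + nu) ->
  u t1 < W * K * exp (nu * t1).
Proof.
  intros Ht Han HK Hu HF H0 Hb.
  set (C := b * K / (a + nu)).
  assert (HC : C <= W * K).
  { unfold C. apply Rle_div_l; [lra|]. nra. }
  assert (Hsplit : forall s, exp ((a + nu) * s) = exp (a * s) * exp (nu * s))
    by (intros s; rewrite <- exp_plus; f_equal; ring).
  assert (Hmono : C * exp ((a + nu) * 0) - exp (a * 0) * u 0
                  <= C * exp ((a + nu) * t1) - exp (a * t1) * u t1).
  { apply (nondecreasing_of_derive_ge0 (fun s => C * exp ((a + nu) * s) - exp (a * s) * u s)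
      (fun s => b * K * exp ((a + nu) * s) - exp (a * s) * F s) t1 Ht).
    - intros s Hs.
      assert (HC' : is_derive (fun s => C * exp ((a + nu) * s)) s (b * K * exp ((a + nu) * s)))
        by (auto_derive; auto; unfold C; field; lra).
      assert (HE := is_derive_exp_mul _ a _ _ (Hu s Hs)).
      replace (b * K * exp ((a + nu) * s) - exp (a * s) * F s)
        with (minus (b * K * exp ((a + nu) * s)) (exp (a * s) * (F s - a * u s + a * u s)))
        by (unfold minus, plus, opp; simpl; ring).
      exact (is_derive_minus _ _ _ _ _ HC' HE).
    - intros s Hs. rewrite Hsplit. specialize (HF s Hs). pose proof (exp_pos (a * s)). nra. }
  rewrite !Rmult_0_r, exp_0, Rmult_1_r, Rmult_1_l in Hmono.
  assert (HE : 1 <= exp ((a + nu) * t1)) by (pose proof (exp_ineq1_le ((a + nu) * t1)); nra).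
  rewrite Hsplit in Hmono, HE. pose proof (exp_pos (a * t1)) as Hpos.
  apply Rmult_lt_reg_l with (exp (a * t1)); [exact Hpos|]. nra.
Qed.

Lemma linear_ode_exp_abs_barrier (u F : R -> R) (a mu b W K t1 : R) :
  0 <= t1 -> 0 < a - mu -> 0 < K ->
  (forall s, 0 <= s <= t1 -> is_derive u s (F s - a * u s)) ->
  (forall s, 0 <= s <= t1 -> Rabs (F s) <= b * K * exp (- mu * s)) ->
  Rabs (u 0) < W * K -> b <= W * (a - mu) ->
  Rabs (u t1) < W * K * exp (- mu * t1).
Proof.
  intros Ht Ham HK Hu HF H0 Hb. apply Rabs_def2 in H0.
  assert (Ham' : 0 < a + - mu) by lra.
  apply Rabs_def1.
  - apply (linear_ode_exp_barrier u F a (- mu) b W K t1); auto; [|lra].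
    intros s Hs. specialize (HF s Hs). apply Rabs_le_between in HF. lra.
  - enough (- u t1 < W * K * exp (- mu * t1)) by lra.
    apply (linear_ode_exp_barrier (fun s => - u s) (fun s => - F s) a (- mu) b W K t1); auto; try lra.
    + intros s Hs. replace (- F s - a * - u s) with (opp (F s - a * u s))
        by (unfold opp; simpl; ring).
      exact (is_derive_opp _ _ _ (Hu s Hs)).
    + intros s Hs. specialize (HF s Hs). apply Rabs_le_between in HF. lra.
Qed.

Lemma linear_ode_exp_lower_barrier (u F : R -> R) (a mu b W K t1 : R) :
  0 <= t1 -> 0 < a + mu -> 0 < K ->
  (forall s, 0 <= s <= t1 -> is_derive u s (F s - a * u s)) ->
  (forall s, 0 <= s <= t1 -> b * K * exp (mu * s) <= F s) ->
  W * K < u 0 -> W * (a + mu) <= b ->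
  W * K * exp (mu * t1) < u t1.
Proof.
  intros Ht Ham HK Hu HF H0 Hb.
  enough (- u t1 < - W * K * exp (mu * t1)) by lra.
  apply (linear_ode_exp_barrier (fun s => - u s) (fun s => - F s) a mu (- b) (- W) K t1); auto; try lra.
  - intros s Hs. replace (- F s - a * - u s) with (opp (F s - a * u s))
      by (unfold opp; simpl; ring).
    exact (is_derive_opp _ _ _ (Hu s Hs)).
  - intros s Hs. specialize (HF s Hs). lra.
Qed.

Fixpoint sumR (n : nat) (g : nat -> R) : R :=
  match n with O => 0 | S n' => sumR n' g + g n' end.

Lemma sumR_ge0 (n : nat) (g : nat -> R) : (forall j, (j < n)%nat -> 0 <= g j) -> 0 <= sumR n g.
Proof.
  induction n as [|n IH]; simpl; intros H; [lra|].
  pose proof (H n ltac:(lia)). pose proof (IH ltac:(intros; apply H; lia)). lra.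
Qed.

Lemma sumR_le (n : nat) (g h : nat -> R) :
  (forall j, (j < n)%nat -> g j <= h j) -> sumR n g <= sumR n h.
Proof.
  induction n as [|n IH]; simpl; intros H; [lra|].
  pose proof (H n ltac:(lia)). pose proof (IH ltac:(intros; apply H; lia)). lra.
Qed.

Lemma sumR_const (n : nat) (c : R) : sumR n (fun _ => c) = INR n * c.
Proof. induction n as [|n IH]; simpl sumR; [simpl; ring|]. rewrite IH, S_INR. ring. Qed.

Lemma sumR_scal (n : nat) (c : R) (g : nat -> R) : sumR n (fun j => c * g j) = c * sumR n g.
Proof. induction n as [|n IH]; simpl; [ring|]. rewrite IH. ring. Qed.

Lemma sumR_ge_term (n : nat) (g : nat -> R) (i : nat) :
  (forall j, (j < n)%nat -> 0 <= g j) -> (i < n)%nat -> g i <= sumR n g.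
Proof.
  induction n as [|n IH]; intros H Hi; [lia|]. simpl.
  destruct (Nat.eq_dec i n) as [->|Hne].
  - pose proof (sumR_ge0 n g ltac:(intros; apply H; lia)). lra.
  - pose proof (H n ltac:(lia)). pose proof (IH ltac:(intros; apply H; lia) ltac:(lia)). lra.
Qed.

Lemma prodR_snoc (a : nat -> R) (k n : nat) : prodR a k (S n) = prodR a k n * a (k + n)%nat.
Proof.
  revert k. induction n as [|n IH]; intros k.
  - simpl. rewrite Nat.add_0_r. ring.
  - change (prodR a k (S (S n))) with (a k * prodR a (S k) (S n)). rewrite IH.
    simpl. replace (S (k + n)) with (k + S n)%nat by lia. ring.
Qed.

Lemma prodR_pos (a : nat -> R) (k n : nat) :
  (forall i, (k <= i)%nat -> (i < k + n)%nat -> 0 < a i) -> 0 < prodR a k n.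
Proof.
  revert k. induction n as [|n IH]; intros k H; simpl; [lra|].
  apply Rmult_lt_0_compat; [apply H; lia|]. apply IH. intros i Hi Hi'. apply H; lia.
Qed.

Lemma prodR_shift_lipschitz (a : nat -> R) (k n : nat) : exists B, 0 <= B /\
  forall mu, Rabs mu <= 1 -> Rabs (prodR (fun i => a i + mu) k n - prodR a k n) <= Rabs mu * B.
Proof.
  revert k. induction n as [|n IH]; intros k.
  - exists 0. split; [lra|]. intros mu _. simpl. rewrite Rminus_diag, Rabs_R0. lra.
  - destruct (IH (S k)) as [B [HB H]].
    exists (Rabs (a k) * B + B + Rabs (prodR a (S k) n)). split.
    { pose proof (Rabs_pos (a k)); pose proof (Rabs_pos (prodR a (S k) n)); nra. }
    intros mu Hmu. simpl. specialize (H mu Hmu).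
    set (Pm := prodR (fun i => a i + mu) (S k) n) in *. set (P := prodR a (S k) n) in *.
    replace ((a k + mu) * Pm - a k * P) with (a k * (Pm - P) + mu * (Pm - P) + mu * P) by ring.
    eapply Rle_trans; [apply Rabs_triang|].
    eapply Rle_trans; [apply Rplus_le_compat_r, Rabs_triang|].
    rewrite !Rabs_mult.
    pose proof (Rabs_pos mu). pose proof (Rabs_pos (a k)). pose proof (Rabs_pos (Pm - P)).
    pose proof (Rabs_pos P).
    assert (Rabs (a k) * Rabs (Pm - P) <= Rabs (a k) * (Rabs mu * B))
      by (apply Rmult_le_compat_l; auto).
    assert (Rabs mu * Rabs (Pm - P) <= 1 * (Rabs mu * B)) by (apply Rmult_le_compat; auto).
    nra.
Qed.

Lemma prodR_shift_continuous (a : nat -> R) (k n : nat) (eps : R) : 0 < eps ->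
  exists mu0, 0 < mu0 /\ forall mu, Rabs mu <= mu0 ->
    Rabs (prodR (fun i => a i + mu) k n - prodR a k n) < eps.
Proof.
  intros He. destruct (prodR_shift_lipschitz a k n) as [B [HB H]].
  set (mu0 := Rmin 1 (eps / (B + 1))).
  assert (H1 : mu0 <= 1) by apply Rmin_l.
  assert (H2 : mu0 * (B + 1) <= eps) by (apply Rle_div_r; [lra| apply Rmin_r]).
  exists mu0. split; [apply Rmin_glb_lt; [lra| apply Rdiv_lt_0_compat; lra]|].
  intros mu Hmu. eapply Rle_lt_trans; [apply H; lra|].
  pose proof (Rabs_pos mu). nra.
Qed.

Lemma exists_rate_shift_down (alpha : nat -> R) (r : nat) (c : R) :
  (forall i, (i < r)%nat -> 0 < alpha i) -> c < prodR alpha 0 r ->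
  exists mu, 0 < mu /\ (forall i, (i < r)%nat -> 0 < alpha i - mu) /\
    c <= prodR (fun i => alpha i - mu) 0 r.
Proof.
  intros Halpha Hc.
  destruct (prodR_shift_continuous alpha 0 r (prodR alpha 0 r - c) ltac:(lra)) as [mu0 [Hmu0 Hprod]].
  destruct (exists_pos_lower_bound alpha r Halpha) as [amin [Hamin Hamin']].
  set (mu := Rmin mu0 (amin / 2)).
  exists mu. split; [apply Rmin_glb_lt; lra|]. split.
  - intros i Hi. specialize (Hamin' i Hi). pose proof (Rmin_r mu0 (amin / 2)). unfold mu. lra.
  - assert (Hmu : 0 < mu) by (apply Rmin_glb_lt; lra).
    specialize (Hprod (- mu) ltac:(rewrite Rabs_Ropp, Rabs_right by lra; apply Rmin_l)).
    apply Rabs_def2 in Hprod. change (fun i => alpha i - mu) with (fun i => alpha i + - mu). lra.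
Qed.

Lemma exists_rate_shift_up (alpha : nat -> R) (r : nat) (c : R) : prodR alpha 0 r < c ->
  exists mu, 0 < mu /\ prodR (fun i => alpha i + mu) 0 r <= c.
Proof.
  intros Hc.
  destruct (prodR_shift_continuous alpha 0 r (c - prodR alpha 0 r) ltac:(lra)) as [mu [Hmu Hprod]].
  exists mu. split; [exact Hmu|].
  specialize (Hprod mu ltac:(rewrite Rabs_right; lra)). apply Rabs_def2 in Hprod. lra.
Qed.

(** * The Hill nonlinearity *)

Definition hill (m s : R) : R := Rpower s m / (1 + Rpower s m).

Lemma Rpower_gt0 (s m : R) : 0 < Rpower s m.
Proof. apply exp_pos. Qed.

Lemma fhill_pos (m u : R) : 0 < u -> fhill m u = hill m u.
Proof.
  intros H. unfold fhill, hill, sgn. destruct (Rlt_dec 0 u); [|lra].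
  rewrite Rabs_right by lra. field. pose proof (Rpower_gt0 u m); lra.
Qed.

Lemma fhill_neg (m u : R) : u < 0 -> fhill m u = - hill m (- u).
Proof.
  intros H. unfold fhill, hill, sgn. destruct (Rlt_dec 0 u); [lra|].
  destruct (Rlt_dec u 0); [|lra].
  rewrite Rabs_left by lra. field. pose proof (Rpower_gt0 (- u) m); lra.
Qed.

Lemma fhill_0 (m : R) : fhill m 0 = 0.
Proof.
  unfold fhill, sgn. destruct (Rlt_dec 0 0); [lra|]. destruct (Rlt_dec 0 0); [lra|].
  unfold Rdiv; ring.
Qed.

Lemma hill_bounds (m s : R) : 0 <= hill m s < 1.
Proof.
  unfold hill. pose proof (Rpower_gt0 s m). split.
  - apply Rdiv_le_0_compat; lra.
  - apply Rlt_div_l; lra.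
Qed.

Lemma hill_le (m s t : R) : 0 <= m -> 0 < s <= t -> hill m s <= hill m t.
Proof.
  intros Hm Hst. unfold hill.
  assert (H := Rle_Rpower_l s t m Hm Hst).
  pose proof (Rpower_gt0 s m). pose proof (Rpower_gt0 t m).
  apply Rmult_le_reg_r with ((1 + Rpower s m) * (1 + Rpower t m)); [nra|].
  field_simplify; nra.
Qed.

Lemma Rpower_le1 (c e : R) : 0 < c <= 1 -> 0 <= e -> Rpower c e <= 1.
Proof.
  intros Hc He. replace 1 with (Rpower 1 e) by (unfold Rpower; rewrite ln_1, Rmult_0_r; apply exp_0).
  apply Rle_Rpower_l; lra.
Qed.

Lemma hill_le_mul (m s : R) : 1 <= m -> 0 < s -> hill m s <= m * s.
Proof.
  intros Hm Hs. pose proof (hill_bounds m s). destruct (Rle_dec 1 s) as [H1|H1]; [nra|].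
  assert (HE : Rpower s m <= s).
  { rewrite <- (Rpower_1 s) at 2 by lra. unfold Rpower. apply exp_le_compat.
    assert (ln s < 0) by (rewrite <- ln_1; apply ln_increasing; lra). nra. }
  unfold hill in *. pose proof (Rpower_gt0 s m).
  assert (Rpower s m / (1 + Rpower s m) <= Rpower s m) by (apply Rle_div_l; nra).
  nra.
Qed.

Lemma hill_sub_le (m s t : R) : 1 <= m -> 0 < s <= t -> hill m t - hill m s <= m * (t - s).
Proof.
  intros Hm Hst.
  destruct (MVT_gen (fun x => Rpower x m) s t (fun c => m * Rpower c (m - 1))) as [c [Hc He]].
  - intros x Hx. rewrite Rmin_left, Rmax_right in Hx by lra.
    apply is_derive_Reals, derivable_pt_lim_power; lra.
  - intros x Hx. rewrite Rmin_left, Rmax_right in Hx by lra.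
    apply continuity_pt_filterlim.
    apply (continuous_of_is_derive (fun x => Rpower x m) _ (m * Rpower x (m - 1))).
    apply is_derive_Reals, derivable_pt_lim_power; lra.
  - rewrite Rmin_left, Rmax_right in Hc by lra. cbv beta in He.
    set (Et := Rpower t m) in *. set (Es := Rpower s m) in *.
    assert (HEt : 0 < Et) by apply Rpower_gt0. assert (HEs : 0 < Es) by apply Rpower_gt0.
    assert (Hb : Rpower c (m - 1) <= (1 + Et) * (1 + Es)).
    { destruct (Rle_dec c 1) as [H1|H1].
      - assert (Rpower c (m - 1) <= 1) by (apply Rpower_le1; lra). nra.
      - assert (Rpower c (m - 1) <= Rpower c m) by (apply Rle_Rpower; lra).
        assert (Rpower c m <= Et) by (apply Rle_Rpower_l; lra). nra. }
    unfold hill. fold Et Es.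
    replace (Et / (1 + Et) - Es / (1 + Es)) with ((Et - Es) / ((1 + Et) * (1 + Es)))
      by (field; lra).
    rewrite He. apply Rle_div_l; [nra|].
    assert (0 <= m * (t - s)) by nra. nra.
Qed.

Lemma hill_lipschitz (m s t : R) : 1 <= m -> 0 < s -> 0 < t ->
  Rabs (hill m t - hill m s) <= m * Rabs (t - s).
Proof.
  intros Hm Hs Ht. destruct (Rle_dec s t).
  - rewrite Rabs_right by (pose proof (hill_le m s t); lra).
    rewrite (Rabs_right (t - s)) by lra. apply hill_sub_le; lra.
  - rewrite Rabs_left1 by (pose proof (hill_le m t s); lra).
    rewrite (Rabs_left1 (t - s)) by lra.
    pose proof (hill_sub_le m t s Hm ltac:(lra)). lra.
Qed.

Lemma fhill_abs_le (m u : R) : 1 <= m -> Rabs (fhill m u) <= m * Rabs u.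
Proof.
  intros Hm. destruct (Rtotal_order u 0) as [Hu|[->|Hu]].
  - rewrite fhill_neg, Rabs_Ropp, Rabs_right, Rabs_left by (try apply Rle_ge, hill_bounds; lra).
    apply hill_le_mul; lra.
  - rewrite fhill_0, Rabs_R0. lra.
  - rewrite fhill_pos, !Rabs_right by (try apply Rle_ge, hill_bounds; lra).
    apply hill_le_mul; lra.
Qed.

Lemma fhill_lipschitz (m u v : R) : 1 <= m -> Rabs (fhill m u - fhill m v) <= m * Rabs (u - v).
Proof.
  intros Hm.
  assert (Hopp : forall u v, v <= 0 <= u -> Rabs (fhill m u - fhill m v) <= m * Rabs (u - v)).
  { intros u' v' Huv. pose proof (fhill_abs_le m u' Hm). pose proof (fhill_abs_le m v' Hm).
    eapply Rle_trans; [apply Rabs_triang|]. rewrite Rabs_Ropp.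
    rewrite (Rabs_right u'), (Rabs_left1 v'), (Rabs_right (u' - v')) in * by lra. lra. }
  destruct (Rlt_dec 0 u) as [Hu|Hu]; destruct (Rlt_dec 0 v) as [Hv|Hv].
  - rewrite !fhill_pos by auto. apply hill_lipschitz; auto.
  - apply Hopp; lra.
  - rewrite Rabs_minus_sym, (Rabs_minus_sym u). apply Hopp; lra.
  - destruct (Req_dec u 0) as [->|Hu0]; [apply Hopp; lra|].
    destruct (Req_dec v 0) as [->|Hv0]; [rewrite Rabs_minus_sym, (Rabs_minus_sym u); apply Hopp; lra|].
    rewrite !fhill_neg by lra.
    replace (- hill m (- u) - - hill m (- v)) with (- (hill m (- u) - hill m (- v))) by ring.
    replace (u - v) with (- (- u - - v)) by ring. rewrite !Rabs_Ropp.
    apply hill_lipschitz; lra.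
Qed.

Lemma fhill_nondecreasing_right (m z : R) : z <> 0 -> 1 <= m ->
  exists del, 0 < del /\ forall h, 0 < h < del -> fhill m z <= fhill m (z + h).
Proof.
  intros Hz Hm. destruct (Rlt_dec 0 z) as [Hp|Hn].
  - exists 1. split; [lra|]. intros h Hh. rewrite !fhill_pos by lra. apply hill_le; lra.
  - exists (- z). split; [lra|]. intros h Hh. rewrite !fhill_neg by lra.
    assert (hill m (- (z + h)) <= hill m (- z)) by (apply hill_le; lra). lra.
Qed.

Lemma is_derive_fhill (m z d : R) : z <> 0 -> is_derive (hfun m) z d ->
  is_derive (fhill m) z (hfun m z + z * d).
Proof.
  intros Hz Hd.
  assert (H := is_derive_mult (fun x => x) (hfun m) z 1 d (is_derive_id z) Hd Rmult_comm).
  eapply is_derive_ext_loc in H.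
  - replace (hfun m z + z * d) with (plus (mult 1 (hfun m z)) (mult z d))
      by (unfold plus, mult; simpl; ring).
    exact H.
  - assert (Hp : 0 < Rabs z) by (apply Rabs_pos_lt; auto).
    exists (mkposreal _ Hp). intros y Hy.
    assert (y <> 0).
    { intros ->. unfold ball in Hy; simpl in Hy. unfold AbsRing_ball, abs, minus, plus, opp in Hy.
      simpl in Hy. rewrite Rplus_0_l, Rabs_Ropp in Hy. lra. }
    unfold mult, hfun; simpl. field. auto.
Qed.

(** * Cascades and exponential barriers *)

Definition cascade_field (r : nat) (alpha : nat -> R) (g : R -> R) (y : nat -> R) (j : nat) : R :=
  match j with
  | O => g (y (r - 1)%nat) - alpha O * y O
  | S j' => y j' - alpha j * y j
  end.

(* [vfield r alpha m] is [cascade_field r alpha (fhill m)]; a general feedback [g] also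
   describes deviations from an equilibrium. *)
Definition is_cascade (r : nat) (alpha : nat -> R) (g : R -> R) (q : R -> nat -> R) : Prop :=
  forall t, 0 <= t -> forall j, (j < r)%nat ->
    is_derive (fun s => q s j) t (cascade_field r alpha g (q t) j).

Lemma is_solution_cascade (r : nat) (alpha : nat -> R) (m : R) (x : R -> nat -> R) :
  is_solution r alpha m x <-> is_cascade r alpha (fhill m) x.
Proof. reflexivity. Qed.

Lemma is_cascade_shift (r : nat) (alpha : nat -> R) (g : R -> R) (p : nat -> R)
    (q : R -> nat -> R) :
  (forall j, (j < r)%nat -> cascade_field r alpha g p j = 0) ->
  is_cascade r alpha g q ->
  is_cascade r alpha (fun u => g (p (r - 1)%nat + u) - g (p (r - 1)%nat)) (fun t j => q t j - p j).
Proof.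
  intros Hp Hq t Ht j Hj. specialize (Hp j Hj).
  replace (cascade_field r alpha _ (fun j => q t j - p j) j)
    with (minus (cascade_field r alpha g (q t) j) 0).
  - exact (is_derive_minus _ _ _ _ _ (Hq t Ht j Hj) (is_derive_const (p j) t)).
  - destruct j as [|j']; simpl in Hp |- *; unfold minus, plus, opp; simpl;
      [replace (p (r - 1)%nat + (q t (r - 1)%nat - p (r - 1)%nat)) with (q t (r - 1)%nat) by ring|];
      lra.
Qed.

Lemma is_cascade_continuous (r : nat) (alpha : nat -> R) (g : R -> R) (q : R -> nat -> R)
    (t : R) (j : nat) :
  is_cascade r alpha g q -> 0 <= t -> (j < r)%nat -> continuous (fun s => q s j) t.
Proof. intros Hq Ht Hj. eapply continuous_of_is_derive, Hq; eauto. Qed.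

Definition cascade_weight (a : nat -> R) (j : nat) : R := / prodR a 1 j.

Lemma cascade_weight_0 (a : nat -> R) : cascade_weight a 0 = 1.
Proof. apply Rinv_1. Qed.

Lemma cascade_weight_pos (a : nat -> R) (r j : nat) :
  (forall i, (i < r)%nat -> 0 < a i) -> (j < r)%nat -> 0 < cascade_weight a j.
Proof. intros Ha Hj. apply Rinv_0_lt_compat, prodR_pos. intros; apply Ha; lia. Qed.

Lemma cascade_weight_succ (a : nat -> R) (j : nat) : a (S j) <> 0 ->
  cascade_weight a j = a (S j) * cascade_weight a (S j).
Proof.
  intros Ha. unfold cascade_weight. rewrite prodR_snoc, Rinv_mult.
  replace (1 + j)%nat with (S j) by lia.
  rewrite (Rmult_comm (/ _)), <- Rmult_assoc, Rinv_r, Rmult_1_l by exact Ha. reflexivity.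
Qed.

Lemma prodR_mul_cascade_weight (a : nat -> R) (r : nat) : (1 <= r)%nat ->
  prodR a 1 (r - 1) <> 0 -> prodR a 0 r * cascade_weight a (r - 1) = a 0%nat.
Proof.
  intros Hr Hp. unfold cascade_weight. destruct r as [|r']; [lia|].
  simpl prodR in *. rewrite Nat.sub_0_r in *. field. exact Hp.
Qed.

Section Cascade_decay.

Variables (r : nat) (alpha a : nat -> R) (g : R -> R) (q : R -> nat -> R) (c eta mu K : R).
Hypothesis r_ge1 : (1 <= r)%nat.
Hypothesis c_ge0 : 0 <= c.
Hypothesis mu_ge0 : 0 <= mu.
Hypothesis K_gt0 : 0 < K.
Hypothesis alpha_shift : forall i, (i < r)%nat -> alpha i = a i + mu.
Hypothesis a_gt0 : forall i, (i < r)%nat -> 0 < a i.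
Hypothesis gain_le_prodR : c <= prodR a 0 r.
Hypothesis g_le : forall u, Rabs u <= eta -> Rabs (g u) <= c * Rabs u.
Hypothesis weight_le : forall j, (j < r)%nat -> cascade_weight a j * K <= eta.
Hypothesis q_cascade : is_cascade r alpha g q.
Hypothesis q_init : forall j, (j < r)%nat -> Rabs (q 0 j) < cascade_weight a j * K.

Let W := cascade_weight a.

Lemma is_cascade_decay_step (t1 : R) : 0 <= t1 ->
  (forall s j, 0 <= s <= t1 -> (j < r)%nat -> Rabs (q s j) <= W j * K * exp (- mu * s)) ->
  forall j, (j < r)%nat -> Rabs (q t1 j) < W j * K * exp (- mu * t1).
Proof.
  intros Ht1 Hle j Hj.
  assert (HW : forall j, (j < r)%nat -> 0 < W j) by (intros; eapply cascade_weight_pos; eauto).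
  destruct j as [|j'].
  - apply (linear_ode_exp_abs_barrier (fun s => q s 0%nat) (fun s => g (q s (r - 1)%nat))
      (alpha 0%nat) mu (c * W (r - 1)%nat) (W 0%nat) K t1 Ht1).
    + rewrite alpha_shift by lia. specialize (a_gt0 0%nat Hj). lra.
    + exact K_gt0.
    + intros s Hs. apply (q_cascade s ltac:(lra) 0%nat Hj).
    + intros s Hs. specialize (Hle s (r - 1)%nat Hs ltac:(lia)).
      specialize (HW (r - 1)%nat ltac:(lia)).
      assert (Hdecay : exp (- mu * s) <= 1) by (rewrite <- exp_0; apply exp_le_compat; nra).
      assert (Hsmall : Rabs (q s (r - 1)%nat) <= eta).
      { specialize (weight_le (r - 1)%nat ltac:(lia)).
        assert (W (r - 1)%nat * K * exp (- mu * s) <= W (r - 1)%nat * K * 1)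
          by (apply Rmult_le_compat_l; nra).
        unfold W in *. lra. }
      specialize (g_le _ Hsmall). nra.
    + exact (q_init 0%nat Hj).
    + rewrite alpha_shift by lia.
      rewrite <- (prodR_mul_cascade_weight a r r_ge1) by
        (apply Rgt_not_eq, prodR_pos; intros; apply a_gt0; lia).
      unfold W. rewrite cascade_weight_0.
      specialize (HW (r - 1)%nat ltac:(lia)). unfold W in HW. nra.
  - apply (linear_ode_exp_abs_barrier (fun s => q s (S j')) (fun s => q s j')
      (alpha (S j')) mu (W j') (W (S j')) K t1 Ht1).
    + rewrite alpha_shift by lia. specialize (a_gt0 (S j') Hj). lra.
    + exact K_gt0.
    + intros s Hs. apply (q_cascade s ltac:(lra) (S j') Hj).
    + intros s Hs. apply (Hle s j' Hs ltac:(lia)).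
    + exact (q_init (S j') Hj).
    + unfold W. rewrite (cascade_weight_succ a j'), alpha_shift by (try apply Rgt_not_eq, a_gt0; lia).
      right. ring.
Qed.

Lemma is_cascade_exp_decay (t : R) (j : nat) : 0 <= t -> (j < r)%nat ->
  Rabs (q t j) < cascade_weight a j * K * exp (- mu * t).
Proof.
  intros Ht Hj. enough (Rabs (q t j) - W j * K * exp (- mu * t) < 0) by (unfold W in *; lra).
  revert t j Ht Hj.
  apply (continuous_induction r (fun j t => Rabs (q t j) - W j * K * exp (- mu * t))).
  - intros j t Hj Ht. apply (continuous_minus (fun s => Rabs (q s j))).
    + apply continuous_Rabs_comp. eapply is_cascade_continuous; eauto.
    + apply continuous_of_is_derive with (- mu * (W j * K * exp (- mu * t))). auto_derive; auto; ring.
  - intros j Hj. rewrite Rmult_0_r, exp_0, Rmult_1_r. specialize (q_init j Hj). unfold W. lra.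
  - intros t1 Ht1 Hle j Hj.
    enough (Rabs (q t1 j) < W j * K * exp (- mu * t1)) by lra.
    apply is_cascade_decay_step; auto. intros s j' Hs Hj'. specialize (Hle s j' Hs Hj'). lra.
Qed.

End Cascade_decay.

Section Cascade_growth.

Variables (r : nat) (alpha a : nat -> R) (g : R -> R) (q : R -> nat -> R) (c eta mu K : R).
Hypothesis r_ge1 : (1 <= r)%nat.
Hypothesis c_ge0 : 0 <= c.
Hypothesis K_gt0 : 0 < K.
Hypothesis alpha_shift : forall i, (i < r)%nat -> alpha i = a i - mu.
Hypothesis a_gt0 : forall i, (i < r)%nat -> 0 < a i.
Hypothesis prodR_le_gain : prodR a 0 r <= c.
Hypothesis g_ge : forall u, 0 <= u <= eta -> c * u <= g u.
Hypothesis q_cascade : is_cascade r alpha g q.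
Hypothesis q_le : forall t j, 0 <= t -> (j < r)%nat -> q t j <= eta.
Hypothesis q_init : forall j, (j < r)%nat -> cascade_weight a j * K < q 0 j.

Let W := cascade_weight a.

Lemma is_cascade_growth_step (t1 : R) : 0 <= t1 ->
  (forall s j, 0 <= s <= t1 -> (j < r)%nat -> W j * K * exp (mu * s) <= q s j) ->
  forall j, (j < r)%nat -> W j * K * exp (mu * t1) < q t1 j.
Proof.
  intros Ht1 Hle j Hj.
  assert (HW : forall j, (j < r)%nat -> 0 < W j) by (intros; eapply cascade_weight_pos; eauto).
  destruct j as [|j'].
  - apply (linear_ode_exp_lower_barrier (fun s => q s 0%nat) (fun s => g (q s (r - 1)%nat))
      (alpha 0%nat) mu (c * W (r - 1)%nat) (W 0%nat) K t1 Ht1).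
    + rewrite alpha_shift by lia. specialize (a_gt0 0%nat Hj). lra.
    + exact K_gt0.
    + intros s Hs. apply (q_cascade s ltac:(lra) 0%nat Hj).
    + intros s Hs. specialize (Hle s (r - 1)%nat Hs ltac:(lia)).
      specialize (HW (r - 1)%nat ltac:(lia)).
      assert (0 < W (r - 1)%nat * K * exp (mu * s))
        by (apply Rmult_lt_0_compat; [nra| apply exp_pos]).
      specialize (g_ge (q s (r - 1)%nat) ltac:(split; [lra| apply q_le; [lra|lia]])).
      assert (c * (W (r - 1)%nat * K * exp (mu * s)) <= c * q s (r - 1)%nat)
        by (apply Rmult_le_compat_l; lra).
      lra.
    + exact (q_init 0%nat Hj).
    + rewrite alpha_shift by lia.
      rewrite <- (prodR_mul_cascade_weight a r r_ge1) by
        (apply Rgt_not_eq, prodR_pos; intros; apply a_gt0; lia).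
      unfold W. rewrite cascade_weight_0.
      specialize (HW (r - 1)%nat ltac:(lia)). unfold W in HW. nra.
  - apply (linear_ode_exp_lower_barrier (fun s => q s (S j')) (fun s => q s j')
      (alpha (S j')) mu (W j') (W (S j')) K t1 Ht1).
    + rewrite alpha_shift by lia. specialize (a_gt0 (S j') Hj). lra.
    + exact K_gt0.
    + intros s Hs. apply (q_cascade s ltac:(lra) (S j') Hj).
    + intros s Hs. apply (Hle s j' Hs ltac:(lia)).
    + exact (q_init (S j') Hj).
    + unfold W. rewrite (cascade_weight_succ a j'), alpha_shift by (try apply Rgt_not_eq, a_gt0; lia).
      right. ring.
Qed.

Lemma is_cascade_exp_growth (t : R) (j : nat) : 0 <= t -> (j < r)%nat ->
  cascade_weight a j * K * exp (mu * t) < q t j.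
Proof.
  intros Ht Hj. enough (W j * K * exp (mu * t) - q t j < 0) by (unfold W in *; lra).
  revert t j Ht Hj.
  apply (continuous_induction r (fun j t => W j * K * exp (mu * t) - q t j)).
  - intros j t Hj Ht. apply (continuous_minus (fun s => W j * K * exp (mu * s))).
    + apply continuous_of_is_derive with (mu * (W j * K * exp (mu * t))). auto_derive; auto; ring.
    + eapply is_cascade_continuous; eauto.
  - intros j Hj. rewrite Rmult_0_r, exp_0, Rmult_1_r. specialize (q_init j Hj). unfold W. lra.
  - intros t1 Ht1 Hle j Hj.
    enough (W j * K * exp (mu * t1) < q t1 j) by lra.
    apply is_cascade_growth_step; auto. intros s j' Hs Hj'. specialize (Hle s j' Hs Hj'). lra.
Qed.

End Cascade_growth.

(** * Global existence by Picard iteration *)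

Lemma is_derive_const_plus (g : R -> R) (t l c : R) :
  is_derive g t l -> is_derive (fun s => c + g s) t l.
Proof.
  intros H. replace l with (plus 0 l) by (unfold plus; simpl; ring).
  exact (is_derive_plus _ _ _ _ _ (is_derive_const c t) H).
Qed.

Lemma is_derive_RInt_from_0 (G : R -> R) (t : R) : (forall s, continuous G s) ->
  is_derive (fun t => RInt G 0 t) t (G t).
Proof.
  intros HG. apply (is_derive_RInt G (fun b => RInt G 0 b) 0 t); [|apply HG].
  apply filter_forall. intros b. apply (@RInt_correct R_CompleteNormedModule).
  apply (@ex_RInt_continuous R_CompleteNormedModule). intros; apply HG.
Qed.

Lemma RInt_mul_pow (A t : R) (k : nat) : RInt (fun s => A * s ^ k) 0 t = A * t ^ (S k) / INR (S k).
Proof.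
  apply is_RInt_unique.
  assert (HS : INR (S k) <> 0) by (apply not_0_INR; lia).
  replace (A * t ^ S k / INR (S k)) with (minus (A * t ^ (S k) / INR (S k)) (A * 0 ^ (S k) / INR (S k)))
    by (unfold minus, plus, opp; simpl; field; exact HS).
  apply (is_RInt_derive (fun s => A * s ^ (S k) / INR (S k))).
  - intros x _. auto_derive; [exact I|].
    change (match k with O => 1 | S _ => INR k + 1 end) with (INR (S k)). field. exact HS.
  - intros x _. apply (continuous_of_is_derive _ _ (A * (INR k * x ^ pred k))). auto_derive; auto; ring.
Qed.

Lemma abs_RInt_le_RInt (g h : R -> R) (a b : R) : a <= b -> ex_RInt g a b -> ex_RInt h a b ->
  (forall s, a < s < b -> Rabs (g s) <= h s) -> Rabs (RInt g a b) <= RInt h a b.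
Proof.
  intros Hab Hg Hh H. apply Rabs_le. split.
  - assert (Ho := RInt_opp h a b Hh). unfold opp in Ho; simpl in Ho.
    enough (RInt (fun x => - h x) a b <= RInt g a b) by lra.
    apply RInt_le; auto.
    + exact (ex_RInt_opp h a b Hh).
    + intros s Hs. specialize (H s Hs). apply Rabs_le_between in H. lra.
  - apply RInt_le; auto. intros s Hs. specialize (H s Hs). apply Rabs_le_between in H. lra.
Qed.

Lemma abs_RInt_0_le (g : R -> R) (t M : R) : ex_RInt g 0 t ->
  (forall s, Rmin 0 t <= s <= Rmax 0 t -> Rabs (g s) <= M) -> Rabs (RInt g 0 t) <= Rabs t * M.
Proof.
  intros Hg H. destruct (Rle_dec 0 t) as [Ht|Ht].
  - rewrite Rmin_left, Rmax_right in H by lra. rewrite (Rabs_right t) by lra.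
    replace t with (t - 0) at 2 by ring. apply abs_RInt_le_const; auto.
  - rewrite Rmin_right, Rmax_left in H by lra. rewrite (Rabs_left t) by lra.
    rewrite <- (opp_RInt_swap g t 0) by (apply ex_RInt_swap; auto).
    unfold opp; simpl. rewrite Rabs_Ropp. replace (- t) with (0 - t) by ring.
    apply abs_RInt_le_const; auto; [lra| apply ex_RInt_swap; auto].
Qed.

Lemma is_series_exp (x : R) : is_series (fun k => x ^ k / INR (fact k)) (exp x).
Proof.
  assert (H := is_exp_Reals x). unfold is_pseries in H. eapply is_series_ext; [|exact H].
  intros k. rewrite pow_n_pow. reflexivity.
Qed.

Lemma fact_mul_le (n k : nat) : (fact n * fact k <= fact (n + k))%nat.
Proof.
  induction k as [|k IH].
  - rewrite Nat.add_0_r. simpl. lia.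
  - replace (n + S k)%nat with (S (n + k)) by lia. simpl (fact (S k)). simpl (fact (S (n + k))).
    assert (fact k <= fact n * fact k)%nat by (pose proof (lt_O_fact n); nia). nia.
Qed.

Section Picard.

Variable n : nat.
Variable F : (nat -> R) -> nat -> R.
Variable L : R.
Hypothesis L_ge0 : 0 <= L.
Hypothesis F_lipschitz : forall y y' j, (j < n)%nat ->
  Rabs (F y j - F y' j) <= L * sumR n (fun i => Rabs (y i - y' i)).
Variable x0 : nat -> R.

Lemma F_ext (y y' : nat -> R) (j : nat) : (j < n)%nat ->
  (forall i, (i < n)%nat -> y i = y' i) -> F y j = F y' j.
Proof.
  intros Hj Hy. assert (H := F_lipschitz y y' j Hj).
  assert (H0 : sumR n (fun i => Rabs (y i - y' i)) <= sumR n (fun _ => 0)).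
  { apply sumR_le. intros i Hi. rewrite Hy, Rminus_diag, Rabs_R0 by exact Hi. lra. }
  rewrite sumR_const, Rmult_0_r in H0. pose proof (Rabs_pos (F y j - F y' j)).
  assert (Habs : Rabs (F y j - F y' j) = 0) by nra. apply Rabs_eq_0 in Habs. lra.
Qed.

Lemma F_continuous (y : R -> nat -> R) (t : R) (j : nat) : (j < n)%nat ->
  (forall i, (i < n)%nat -> continuous (fun s => y s i) t) -> continuous (fun s => F (y s) j) t.
Proof.
  intros Hj Hy. apply continuous_eps_delta. intros eps He.
  set (N := INR n * L). assert (HN : 0 <= N) by (apply Rmult_le_pos; [apply pos_INR| exact L_ge0]).
  set (e := eps / (N + 1)). assert (Hee : 0 < e) by (apply Rdiv_lt_0_compat; lra).
  destruct (exists_common_delta n (fun i d => forall s, Rabs (s - t) < d -> Rabs (y s i - y t i) < e))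
    as [d [Hd Hd']].
  { intros i d d' Hi Hdd s Hs. apply Hi. lra. }
  { intros i Hi. destruct (proj1 (continuous_eps_delta _ _) (Hy i Hi) e Hee) as [d Hd].
    exists d. exact Hd. }
  exists d. split; [exact Hd|]. intros s Hs.
  eapply Rle_lt_trans; [apply F_lipschitz, Hj|].
  assert (Hsum : sumR n (fun i => Rabs (y s i - y t i)) <= INR n * e).
  { rewrite <- sumR_const. apply sumR_le. intros i Hi. left. apply Hd'; auto. }
  assert (N * e = eps - e) by (unfold e; field; lra).
  unfold N in *. nra.
Qed.

(* Integrating along [Rmax 0 s] makes the iteration stationary after one step at negative
   times, so only [t >= 0] needs estimates. *)
Fixpoint picard (k : nat) : R -> nat -> R :=
  match k with
  | O => fun _ j => x0 j
  | S k' => fun t j => x0 j + RInt (fun s => F (picard k' (Rmax 0 s)) j) 0 t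
  end.

Lemma picard_rhs_continuous (k i : nat) (t : R) : (i < n)%nat ->
  (forall i' t', (i' < n)%nat -> continuous (fun s => picard k s i') t') ->
  continuous (fun s => F (picard k (Rmax 0 s)) i) t.
Proof.
  intros Hi Hk. apply (F_continuous (fun s => picard k (Rmax 0 s))); [exact Hi|].
  intros i' Hi'. apply (continuous_comp (Rmax 0) (fun u => picard k u i')).
  - apply continuous_Rmax0.
  - apply Hk, Hi'.
Qed.

Lemma picard_succ_derive (k i : nat) (t : R) : (i < n)%nat ->
  (forall i' t', (i' < n)%nat -> continuous (fun s => picard k s i') t') ->
  is_derive (fun s => picard (S k) s i) t (F (picard k (Rmax 0 t)) i).
Proof.
  intros Hi Hk. apply is_derive_const_plus, is_derive_RInt_from_0.
  intros s. apply picard_rhs_continuous; auto.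
Qed.

Lemma picard_continuous (k i : nat) (t : R) : (i < n)%nat -> continuous (fun s => picard k s i) t.
Proof.
  revert i t. induction k as [|k IH]; intros i t Hi; [apply continuous_const|].
  eapply continuous_of_is_derive, picard_succ_derive; auto.
Qed.

Lemma picard_rhs_ex_RInt (k i : nat) (a b : R) : (i < n)%nat ->
  ex_RInt (fun s => F (picard k (Rmax 0 s)) i) a b.
Proof.
  intros Hi. apply (@ex_RInt_continuous R_CompleteNormedModule). intros.
  apply picard_rhs_continuous; auto. intros; apply picard_continuous; auto.
Qed.

Lemma picard_at_0 (k i : nat) : picard k 0 i = x0 i.
Proof. destruct k; simpl; [reflexivity|]. rewrite RInt_point. unfold zero; simpl. ring. Qed.

Lemma picard_nonpos (k i : nat) (t : R) : (i < n)%nat -> t <= 0 ->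
  picard (S (S k)) t i = picard (S k) t i.
Proof.
  intros Hi Ht.
  change (x0 i + RInt (fun s => F (picard (S k) (Rmax 0 s)) i) 0 t
          = x0 i + RInt (fun s => F (picard k (Rmax 0 s)) i) 0 t).
  f_equal. apply RInt_ext. intros s Hs.
  rewrite Rmin_right, Rmax_left in Hs by lra. rewrite Rmax_left by lra.
  apply F_ext; auto. intros i' _. rewrite !picard_at_0. reflexivity.
Qed.

Definition picard_gap (k : nat) (t : R) : R :=
  sumR n (fun j => Rabs (picard (S k) t j - picard k t j)).

Let S0 : R := sumR n (fun j => Rabs (F x0 j)).
Let N : R := INR n * L.

Lemma S0_ge0 : 0 <= S0.
Proof. apply sumR_ge0. intros; apply Rabs_pos. Qed.

Lemma N_ge0 : 0 <= N.
Proof. apply Rmult_le_pos; [apply pos_INR| exact L_ge0]. Qed.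

Lemma picard_gap_0 (t : R) : picard_gap 0 t <= S0 * Rabs t.
Proof.
  unfold picard_gap, S0. rewrite Rmult_comm, <- sumR_scal. apply sumR_le. intros j Hj.
  simpl. rewrite RInt_const. unfold scal; simpl; unfold mult; simpl.
  change (Rabs (x0 j + (t - 0) * F x0 j - x0 j) <= Rabs t * Rabs (F x0 j)).
  replace (x0 j + (t - 0) * F x0 j - x0 j) with (t * F x0 j) by ring.
  rewrite Rabs_mult. lra.
Qed.

Lemma picard_gap_nonpos (k : nat) (t : R) : t <= 0 -> picard_gap (S k) t <= 0.
Proof.
  intros Ht. unfold picard_gap. rewrite <- (Rmult_0_r (INR n)), <- sumR_const.
  apply sumR_le. intros j Hj. rewrite picard_nonpos, Rminus_diag, Rabs_R0 by auto. lra.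
Qed.

Lemma picard_component_step (k j : nat) (t A : R) : 0 <= t -> (j < n)%nat ->
  (forall s, 0 <= s <= t -> L * picard_gap k s <= A * s ^ S k) ->
  Rabs (picard (S (S k)) t j - picard (S k) t j) <= A * t ^ S (S k) / INR (S (S k)).
Proof.
  intros Ht Hj Hgap.
  change (Rabs ((x0 j + RInt (fun s => F (picard (S k) (Rmax 0 s)) j) 0 t)
                - (x0 j + RInt (fun s => F (picard k (Rmax 0 s)) j) 0 t))
          <= A * t ^ S (S k) / INR (S (S k))).
  rewrite <- RInt_mul_pow.
  replace (_ - _) with (RInt (fun s => F (picard (S k) (Rmax 0 s)) j - F (picard k (Rmax 0 s)) j) 0 t).
  2:{ rewrite (RInt_minus (fun s => F (picard (S k) (Rmax 0 s)) j)) by (apply picard_rhs_ex_RInt; auto).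
      unfold minus, plus, opp; simpl. ring. }
  apply abs_RInt_le_RInt; [exact Ht| | |].
  - apply (ex_RInt_minus (V := R_NormedModule)); apply picard_rhs_ex_RInt; auto.
  - apply (@ex_RInt_continuous R_CompleteNormedModule). intros s _.
    apply (@ex_derive_continuous R_AbsRing R_NormedModule). auto_derive. exact I.
  - intros s Hs. rewrite Rmax_right by lra.
    eapply Rle_trans; [apply F_lipschitz, Hj|]. apply Hgap. lra.
Qed.

Lemma picard_gap_bound (k : nat) (t : R) :
  picard_gap k t <= S0 * N ^ k * Rabs t ^ S k / INR (fact (S k)).
Proof.
  revert t. induction k as [|k IH]; intros t.
  - simpl. rewrite Rdiv_1_r, !Rmult_1_r. apply picard_gap_0.
  - assert (Hrhs : 0 <= S0 * N ^ S k * Rabs t ^ S (S k) / INR (fact (S (S k)))).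
    { apply Rdiv_le_0_compat; [|apply INR_fact_lt_0].
      apply Rmult_le_pos; [apply Rmult_le_pos|]; [apply S0_ge0| apply pow_le, N_ge0| apply pow_le, Rabs_pos]. }
    destruct (Rle_dec t 0) as [Ht|Ht]; [pose proof (picard_gap_nonpos k t Ht); lra|].
    set (A := L * (S0 * N ^ k / INR (fact (S k)))).
    unfold picard_gap at 1.
    apply Rle_trans with (sumR n (fun _ => A * t ^ S (S k) / INR (S (S k)))).
    + apply sumR_le. intros j Hj. apply picard_component_step; [lra| exact Hj|].
      intros s Hs. specialize (IH s). rewrite (Rabs_right s) in IH by lra.
      unfold A. replace (L * (S0 * N ^ k / INR (fact (S k))) * s ^ S k)
        with (L * (S0 * N ^ k * s ^ S k / INR (fact (S k)))) by (field; apply INR_fact_neq_0).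
      apply Rmult_le_compat_l; [exact L_ge0| exact IH].
    + rewrite sumR_const. unfold A, N. rewrite (Rabs_right t) by lra.
      change (fact (S (S k))) with (S (S k) * fact (S k))%nat. rewrite mult_INR.
      simpl pow. right. field. split; [apply INR_fact_neq_0| apply not_0_INR; lia].
Qed.

Definition picard_majorant (k : nat) (T : R) : R := S0 * T * (N * T) ^ k / INR (fact k).

Lemma picard_step_le (k j : nat) (t T : R) : (j < n)%nat -> Rabs t <= T ->
  Rabs (picard (S k) t j - picard k t j) <= picard_majorant k T.
Proof.
  intros Hj Ht. assert (HT : 0 <= T) by (pose proof (Rabs_pos t); lra).
  apply Rle_trans with (picard_gap k t).
  { apply (sumR_ge_term n (fun j => Rabs (picard (S k) t j - picard k t j))); auto.
    intros; apply Rabs_pos. }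
  eapply Rle_trans; [apply picard_gap_bound|]. unfold picard_majorant.
  assert (Hf : INR (fact k) <= INR (fact (S k))) by (apply le_INR; simpl; lia).
  assert (Hf0 : 0 < INR (fact k)) by apply INR_fact_lt_0.
  assert (Hp : Rabs t ^ S k <= T ^ S k) by (apply pow_incr; split; [apply Rabs_pos| auto]).
  pose proof S0_ge0. pose proof N_ge0.
  assert (HNk : 0 <= N ^ k) by (apply pow_le; lra).
  assert (Htk : 0 <= Rabs t ^ S k) by (apply pow_le, Rabs_pos).
  rewrite Rpow_mult_distr. simpl (T ^ S k) in Hp.
  unfold Rdiv. apply Rle_trans with (S0 * N ^ k * Rabs t ^ S k * / INR (fact k)).
  - apply Rmult_le_compat_l; [apply Rmult_le_pos; [apply Rmult_le_pos|]; auto|].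
    apply Rinv_le_contravar; auto.
  - apply Rmult_le_compat_r; [left; apply Rinv_0_lt_compat; auto|].
    replace (S0 * T * (N ^ k * T ^ k)) with (S0 * N ^ k * (T * T ^ k)) by ring.
    apply Rmult_le_compat_l; [apply Rmult_le_pos; auto| auto].
Qed.

Lemma is_series_picard_majorant (T : R) :
  is_series (fun k => picard_majorant k T) (S0 * T * exp (N * T)).
Proof.
  eapply is_series_ext; [|exact (is_series_scal (S0 * T) _ _ (is_series_exp (N * T)))].
  intros k. unfold picard_majorant, scal; simpl; unfold mult; simpl. unfold Rdiv. ring.
Qed.

Lemma picard_majorant_shift (k i : nat) (T : R) : 0 <= T ->
  picard_majorant (k + i) T <= picard_majorant k T * ((N * T) ^ i / INR (fact i)).
Proof.
  intros HT. unfold picard_majorant. pose proof S0_ge0. pose proof N_ge0.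
  assert (Hf := fact_mul_le k i). apply le_INR in Hf. rewrite mult_INR in Hf.
  assert (Hf1 : 0 < INR (fact k)) by apply INR_fact_lt_0.
  assert (Hf2 : 0 < INR (fact i)) by apply INR_fact_lt_0.
  rewrite pow_add.
  assert (HP : 0 <= S0 * T * ((N * T) ^ k * (N * T) ^ i))
    by (apply Rmult_le_pos; [apply Rmult_le_pos; auto| apply Rmult_le_pos; apply pow_le; nra]).
  replace (S0 * T * (N * T) ^ k / INR (fact k) * ((N * T) ^ i / INR (fact i)))
    with (S0 * T * ((N * T) ^ k * (N * T) ^ i) / (INR (fact k) * INR (fact i))) by (field; lra).
  unfold Rdiv. apply Rmult_le_compat_l; auto. apply Rinv_le_contravar; [nra| auto].
Qed.

Definition picard_limit (t : R) (j : nat) : R :=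
  x0 j + Series (fun k => picard (S k) t j - picard k t j).

Lemma picard_telescope (k j : nat) (t : R) :
  picard (S k) t j = x0 j + sum_f_R0 (fun i => picard (S i) t j - picard i t j) k.
Proof.
  induction k as [|k IH].
  - cbn [sum_f_R0]. change (picard 0 t j) with (x0 j). ring.
  - cbn [sum_f_R0]. rewrite <- Rplus_assoc, <- IH. ring.
Qed.

Definition picard_tail (k : nat) (T : R) : R := picard_majorant (S k) T * exp (N * T).

Lemma picard_limit_sub_le (k j : nat) (t T : R) : (j < n)%nat -> Rabs t <= T ->
  Rabs (picard_limit t j - picard (S k) t j) <= picard_tail k T.
Proof.
  intros Hj Ht. assert (HT : 0 <= T) by (pose proof (Rabs_pos t); lra).
  set (d := fun i => picard (S i) t j - picard i t j).
  assert (Hd : ex_series d).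
  { apply (ex_series_le d (fun i => picard_majorant i T)).
    - intros i. apply (picard_step_le i j t T Hj Ht).
    - eexists. apply is_series_picard_majorant. }
  unfold picard_limit. fold d. rewrite picard_telescope. fold d.
  replace (x0 j + Series d - (x0 j + sum_f_R0 d k)) with (Series (fun i => d (S k + i)%nat))
    by (rewrite (Series_incr_n d (S k)) by (lia || exact Hd); simpl pred; ring).
  set (c := picard_majorant (S k) T).
  set (b := fun i => c * ((N * T) ^ i / INR (fact i))).
  assert (Hb : is_series b (c * exp (N * T))) by exact (is_series_scal c _ _ (is_series_exp (N * T))).
  assert (Hdb : forall i, Rabs (d (S k + i)%nat) <= b i).
  { intros i. eapply Rle_trans; [apply (picard_step_le _ j t T Hj Ht)|].
    apply picard_majorant_shift; exact HT. }
  assert (Hbex : ex_series b) by (eexists; exact Hb).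
  eapply Rle_trans; [apply Series_Rabs|].
  { apply (@ex_series_le R_AbsRing R_CompleteNormedModule _ b); auto.
    intros i. unfold norm; simpl; unfold abs; simpl. rewrite Rabs_Rabsolu. apply Hdb. }
  eapply Rle_trans; [apply Series_le; [intros i; split; [apply Rabs_pos| apply Hdb]| exact Hbex]|].
  rewrite (is_series_unique (fun i => b i) _ Hb). right. reflexivity.
Qed.

Lemma picard_tail_small (T : R) : 0 <= T -> forall eps, 0 < eps ->
  exists k0, forall k, (k0 <= k)%nat -> picard_tail k T < eps.
Proof.
  intros HT eps He.
  set (C := S0 * T * exp (N * T)).
  assert (HC : 0 <= C).
  { pose proof S0_ge0. pose proof (exp_pos (N * T)). apply Rmult_le_pos; [apply Rmult_le_pos|]; lra. }
  destruct (cv_speed_pow_fact (N * T) (eps / (C + 1)) ltac:(apply Rdiv_lt_0_compat; lra))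
    as [k0 Hk0].
  exists k0. intros k Hk. specialize (Hk0 (S k) ltac:(lia)).
  unfold R_dist in Hk0. rewrite Rminus_0_r in Hk0.
  set (u := (N * T) ^ S k / INR (fact (S k))) in *.
  assert (Hu : 0 <= u).
  { apply Rdiv_le_0_compat; [apply pow_le; pose proof N_ge0; nra| apply INR_fact_lt_0]. }
  rewrite Rabs_right in Hk0 by lra.
  replace (picard_tail k T) with (C * u)
    by (unfold picard_tail, picard_majorant, C, u; field; apply INR_fact_neq_0).
  assert (C * u <= C * (eps / (C + 1))) by (apply Rmult_le_compat_l; lra).
  assert (C * (eps / (C + 1)) < eps).
  { apply Rmult_lt_reg_r with (C + 1); [lra|].
    replace (C * (eps / (C + 1)) * (C + 1)) with (C * eps) by (field; lra). nra. }
  lra.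
Qed.

Lemma picard_limit_continuous (t : R) (j : nat) : (j < n)%nat ->
  continuous (fun s => picard_limit s j) t.
Proof.
  intros Hj. apply continuous_eps_delta. intros eps He.
  set (T := Rabs t + 1). assert (HT : 0 <= T) by (unfold T; pose proof (Rabs_pos t); lra).
  destruct (picard_tail_small T HT (eps / 3) ltac:(lra)) as [k Hk].
  specialize (Hk k (le_n k)).
  destruct (proj1 (continuous_eps_delta _ _) (picard_continuous (S k) j t Hj) (eps / 3) ltac:(lra))
    as [d [Hd Hd']].
  exists (Rmin d 1). split; [apply Rmin_glb_lt; lra|].
  intros s Hs. pose proof (Rmin_l d 1). pose proof (Rmin_r d 1).
  assert (HsT : Rabs s <= T).
  { unfold T. replace s with ((s - t) + t) by ring.
    pose proof (Rabs_triang (s - t) t). lra. }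
  pose proof (picard_limit_sub_le k j s T Hj HsT).
  pose proof (picard_limit_sub_le k j t T Hj ltac:(unfold T; lra)).
  specialize (Hd' s ltac:(lra)).
  replace (picard_limit s j - picard_limit t j) with
    ((picard_limit s j - picard (S k) s j) + (picard (S k) s j - picard (S k) t j)
     - (picard_limit t j - picard (S k) t j)) by ring.
  pose proof (Rabs_triang (picard_limit s j - picard (S k) s j + (picard (S k) s j - picard (S k) t j))
    (- (picard_limit t j - picard (S k) t j))).
  pose proof (Rabs_triang (picard_limit s j - picard (S k) s j) (picard (S k) s j - picard (S k) t j)).
  rewrite Rabs_Ropp in *. unfold Rminus at 1. lra.
Qed.

Lemma picard_limit_rhs_continuous (j : nat) (t : R) : (j < n)%nat ->
  continuous (fun s => F (picard_limit (Rmax 0 s)) j) t.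
Proof.
  intros Hj. apply (F_continuous (fun s => picard_limit (Rmax 0 s))); [exact Hj|].
  intros i Hi. apply (continuous_comp (Rmax 0) (fun u => picard_limit u i)).
  - apply continuous_Rmax0.
  - apply picard_limit_continuous, Hi.
Qed.

Lemma abs_RInt_picard_rhs_sub_le (k j : nat) (t : R) : (j < n)%nat ->
  Rabs (RInt (fun s => F (picard (S k) (Rmax 0 s)) j - F (picard_limit (Rmax 0 s)) j) 0 t)
  <= Rabs t * (L * (INR n * picard_tail k (Rabs t))).
Proof.
  intros Hj. apply abs_RInt_0_le.
  - apply (@ex_RInt_continuous R_CompleteNormedModule). intros z _.
    apply (continuous_minus (fun s => F (picard (S k) (Rmax 0 s)) j)).
    + apply picard_rhs_continuous; auto. intros; apply picard_continuous; auto.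
    + apply picard_limit_rhs_continuous, Hj.
  - intros s Hs.
    eapply Rle_trans; [apply F_lipschitz, Hj|]. apply Rmult_le_compat_l; [exact L_ge0|].
    rewrite <- sumR_const. apply sumR_le. intros i Hi. rewrite Rabs_minus_sym.
    apply picard_limit_sub_le; [exact Hi|].
    unfold Rmax at 1. destruct (Rle_dec 0 s); [|rewrite Rabs_R0; apply Rabs_pos].
    unfold Rmin, Rmax in Hs. destruct (Rle_dec 0 t); rewrite Rabs_right by lra;
      [rewrite Rabs_right by lra; lra| rewrite Rabs_left by lra; lra].
Qed.

Lemma picard_limit_integral (t : R) (j : nat) : (j < n)%nat ->
  picard_limit t j = x0 j + RInt (fun s => F (picard_limit (Rmax 0 s)) j) 0 t.
Proof.
  intros Hj.
  set (H := fun s => F (picard_limit (Rmax 0 s)) j).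
  set (A := picard_limit t j - (x0 j + RInt H 0 t)).
  enough (A = 0) by (unfold A in *; lra).
  set (T := Rabs t). assert (HT : 0 <= T) by apply Rabs_pos.
  set (Q := 1 + T * (L * INR n)).
  assert (HLn : 0 <= T * (L * INR n)) by (pose proof (pos_INR n); apply Rmult_le_pos; nra).
  enough (Hsmall : forall eps, 0 < eps -> Rabs A < eps).
  { destruct (Req_dec A 0) as [|HA]; [auto|].
    specialize (Hsmall (Rabs A) (Rabs_pos_lt A HA)). lra. }
  intros eps He.
  destruct (picard_tail_small T HT (eps / Q) ltac:(apply Rdiv_lt_0_compat; unfold Q; lra))
    as [k Hk].
  set (G := fun s => F (picard (S k) (Rmax 0 s)) j).
  assert (HA : A = (picard_limit t j - picard (S (S k)) t j) + RInt (fun s => G s - H s) 0 t).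
  { change (picard (S (S k)) t j) with (x0 j + RInt G 0 t). unfold A.
    rewrite (RInt_minus G H).
    - unfold minus, plus, opp; simpl. ring.
    - apply picard_rhs_ex_RInt, Hj.
    - apply (@ex_RInt_continuous R_CompleteNormedModule). intros; apply picard_limit_rhs_continuous, Hj. }
  assert (H1 := picard_limit_sub_le (S k) j t T Hj ltac:(unfold T; lra)).
  assert (H2 : Rabs (RInt (fun s => G s - H s) 0 t) <= T * (L * (INR n * picard_tail k T)))
    by exact (abs_RInt_picard_rhs_sub_le k j t Hj).
  pose proof (Hk k (le_n k)) as Hk0. pose proof (Hk (S k) (le_S _ _ (le_n k))) as Hk1.
  rewrite HA. eapply Rle_lt_trans; [apply Rabs_triang|].
  assert (T * (L * (INR n * picard_tail k T)) <= T * (L * INR n) * (eps / Q)).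
  { replace (T * (L * (INR n * picard_tail k T))) with (T * (L * INR n) * picard_tail k T) by ring.
    apply Rmult_le_compat_l; lra. }
  assert (eps / Q + T * (L * INR n) * (eps / Q) = eps) by (unfold Q; field; lra).
  lra.
Qed.

Lemma picard_solution : exists x : R -> nat -> R,
  (forall t, 0 <= t -> forall j, (j < n)%nat -> is_derive (fun s => x s j) t (F (x t) j)) /\
  forall j, (j < n)%nat -> x 0 j = x0 j.
Proof.
  exists picard_limit. split.
  - intros t Ht j Hj.
    apply (is_derive_ext (fun s => x0 j + RInt (fun u => F (picard_limit (Rmax 0 u)) j) 0 s)).
    { intros s. symmetry. apply picard_limit_integral, Hj. }
    rewrite <- (Rmax_right 0 t) at 2 by exact Ht.
    apply is_derive_const_plus, is_derive_RInt_from_0.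
    intros; apply picard_limit_rhs_continuous, Hj.
  - intros j Hj. rewrite picard_limit_integral, RInt_point by exact Hj. unfold zero; simpl. ring.
Qed.

End Picard.

Lemma cascade_field_lipschitz (r : nat) (alpha : nat -> R) (g : R -> R) (Lg : R) :
  (1 <= r)%nat -> 0 <= Lg -> (forall u v, Rabs (g u - g v) <= Lg * Rabs (u - v)) ->
  forall y y' j, (j < r)%nat ->
    Rabs (cascade_field r alpha g y j - cascade_field r alpha g y' j)
    <= (Lg + 1 + sumR r (fun i => Rabs (alpha i))) * sumR r (fun i => Rabs (y i - y' i)).
Proof.
  intros Hr HLg Hg y y' j Hj.
  set (D := sumR r (fun i => Rabs (y i - y' i))).
  set (A := sumR r (fun i => Rabs (alpha i))).
  assert (HD : forall i, (i < r)%nat -> Rabs (y i - y' i) <= D)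
    by (intros i Hi; apply (sumR_ge_term r (fun i => Rabs (y i - y' i))); auto; intros; apply Rabs_pos).
  assert (HA : forall i, (i < r)%nat -> Rabs (alpha i) <= A)
    by (intros i Hi; apply (sumR_ge_term r (fun i => Rabs (alpha i))); auto; intros; apply Rabs_pos).
  assert (HD0 : 0 <= D) by (apply sumR_ge0; intros; apply Rabs_pos).
  assert (HA0 : 0 <= A) by (apply sumR_ge0; intros; apply Rabs_pos).
  destruct j as [|j']; simpl.
  - replace (g (y (r - 1)%nat) - alpha 0%nat * y 0%nat - (g (y' (r - 1)%nat) - alpha 0%nat * y' 0%nat))
      with ((g (y (r - 1)%nat) - g (y' (r - 1)%nat)) - alpha 0%nat * (y 0%nat - y' 0%nat)) by ring.
    eapply Rle_trans; [apply Rabs_triang|]. rewrite Rabs_Ropp, Rabs_mult.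
    pose proof (Hg (y (r - 1)%nat) (y' (r - 1)%nat)).
    pose proof (HD (r - 1)%nat ltac:(lia)). pose proof (HD 0%nat ltac:(lia)).
    pose proof (HA 0%nat ltac:(lia)). pose proof (Rabs_pos (alpha 0%nat)).
    pose proof (Rabs_pos (y 0%nat - y' 0%nat)). pose proof (Rabs_pos (y (r - 1)%nat - y' (r - 1)%nat)).
    nra.
  - replace (y j' - alpha (S j') * y (S j') - (y' j' - alpha (S j') * y' (S j')))
      with ((y j' - y' j') - alpha (S j') * (y (S j') - y' (S j'))) by ring.
    eapply Rle_trans; [apply Rabs_triang|]. rewrite Rabs_Ropp, Rabs_mult.
    pose proof (HD j' ltac:(lia)). pose proof (HD (S j') ltac:(lia)).
    pose proof (HA (S j') ltac:(lia)). pose proof (Rabs_pos (alpha (S j'))).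
    pose proof (Rabs_pos (y (S j') - y' (S j'))). nra.
Qed.

Lemma is_solution_exists (r : nat) (alpha : nat -> R) (m : R) (x0 : nat -> R) :
  (1 <= r)%nat -> 1 <= m ->
  exists x, is_solution r alpha m x /\ forall j, (j < r)%nat -> x 0 j = x0 j.
Proof.
  intros Hr Hm.
  assert (HL : 0 <= m + 1 + sumR r (fun i => Rabs (alpha i)))
    by (pose proof (sumR_ge0 r (fun i => Rabs (alpha i)) ltac:(intros; apply Rabs_pos)); lra).
  destruct (picard_solution r (cascade_field r alpha (fhill m)) _ HL
    (cascade_field_lipschitz r alpha (fhill m) m Hr ltac:(lra) (fun u v => fhill_lipschitz m u v Hm))
    x0) as [x [Hx Hx0]].
  exists x. split; [exact (proj2 (is_solution_cascade r alpha m x) Hx)| exact Hx0].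
Qed.


(** * Stability of the equilibrium z V0 *)

Lemma V0_last (r : nat) (alpha : nat -> R) : V0 r alpha (r - 1) = 1.
Proof. unfold V0. replace (r - 1 - (r - 1))%nat with 0%nat by lia. reflexivity. Qed.

Lemma V0_succ (r : nat) (alpha : nat -> R) (j : nat) : (S j < r)%nat ->
  V0 r alpha j = alpha (S j) * V0 r alpha (S j).
Proof. intros Hj. unfold V0. replace (r - 1 - j)%nat with (S (r - 1 - S j)) by lia. reflexivity. Qed.

Lemma phi_V0 (r : nat) (alpha : nat -> R) : (1 <= r)%nat -> phi r alpha = alpha 0%nat * V0 r alpha 0.
Proof. intros Hr. unfold phi, V0. destruct r as [|r']; [lia|]. simpl. do 2 f_equal. lia. Qed.

Lemma V0_equilibrium (r : nat) (alpha : nat -> R) (m z : R) :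
  (1 <= r)%nat -> z <> 0 -> hfun m z = phi r alpha ->
  forall j, (j < r)%nat -> cascade_field r alpha (fhill m) (fun j => z * V0 r alpha j) j = 0.
Proof.
  intros Hr Hz Hh j Hj. destruct j as [|j']; simpl.
  - rewrite V0_last, Rmult_1_r.
    replace (fhill m z) with (z * hfun m z) by (unfold hfun; field; exact Hz).
    rewrite Hh, phi_V0 by exact Hr. ring.
  - rewrite (V0_succ r alpha j' Hj). ring.
Qed.

Lemma exp_decay_lt (A mu eps t : R) : 0 <= A -> 0 < mu -> 0 < eps -> A / (eps * mu) <= t ->
  A * exp (- mu * t) < eps.
Proof.
  intros HA Hmu He Ht.
  assert (HAt : A <= eps * mu * t) by (apply Rle_div_l in Ht; nra).
  pose proof (exp_neg_mul_one_plus_le1 (mu * t)) as Hexp. rewrite Ropp_mult_distr_l in Hexp.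
  pose proof (exp_pos (- mu * t)). nra.
Qed.

Lemma is_solution_deviation_cascade (r : nat) (alpha : nat -> R) (m z : R) (x : R -> nat -> R) :
  (1 <= r)%nat -> z <> 0 -> hfun m z = phi r alpha -> is_solution r alpha m x ->
  is_cascade r alpha (fun u => fhill m (z + u) - fhill m z) (fun t j => x t j - z * V0 r alpha j).
Proof.
  intros Hr Hz Hh Hx.
  assert (Hq := is_cascade_shift _ _ _ _ _ (V0_equilibrium r alpha m z Hr Hz Hh)
    (proj1 (is_solution_cascade r alpha m x) Hx)).
  cbv beta in Hq. rewrite V0_last, Rmult_1_r in Hq. exact Hq.
Qed.

Lemma V0_asymp_stable (r : nat) (alpha : nat -> R) (m z c : R) :
  (1 <= r)%nat -> (forall i, (i < r)%nat -> 0 < alpha i) -> z <> 0 ->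
  hfun m z = phi r alpha -> is_derive (fhill m) z c -> 0 <= c < phi r alpha ->
  asymp_stable r alpha m (fun j => z * V0 r alpha j).
Proof.
  intros Hr Halpha Hz Hh Hd [Hc0 Hcphi].
  set (c' := (c + phi r alpha) / 2).
  destruct (is_derive_increment_le (fhill m) z c c' Hd ltac:(rewrite Rabs_right; unfold c'; lra))
    as [eta [Heta Hf]].
  destruct (exists_rate_shift_down alpha r c' Halpha ltac:(unfold c', phi in *; lra))
    as [mu [Hmu [Ha Hprod]]].
  set (a := fun i => alpha i - mu) in Hprod.
  set (W := cascade_weight a).
  destruct (exists_upper_bound W r) as [Wmax [HWmax HWmax']].
  destruct (exists_pos_lower_bound W r ltac:(intros; eapply cascade_weight_pos; eauto))
    as [Wmin [HWmin HWmin']].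
  set (K := eta / Wmax).
  assert (HK : 0 < K) by (apply Rdiv_lt_0_compat; lra).
  exists (Wmin * K). split; [nra|].
  intros eps Heps. exists (Wmax * K / (eps * mu)).
  intros x Hx H0 t Ht j Hj.
  assert (Ht0 : 0 <= t).
  { enough (0 <= Wmax * K / (eps * mu)) by lra. apply Rdiv_le_0_compat; nra. }
  assert (Hbound : Rabs (x t j - z * V0 r alpha j) < W j * K * exp (- mu * t)).
  { apply (is_cascade_exp_decay r alpha a (fun u => fhill m (z + u) - fhill m z)
      (fun t j => x t j - z * V0 r alpha j) c' eta mu K); auto.
    - unfold c'; lra.
    - lra.
    - intros i _. unfold a. ring.
    - intros k Hk. fold W. replace eta with (Wmax * K) by (unfold K; field; lra).
      apply Rmult_le_compat_r; [lra| exact (HWmax' k Hk)].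
    - apply is_solution_deviation_cascade; auto.
    - intros k Hk. specialize (H0 k Hk). specialize (HWmin' k Hk). fold W. nra. }
  specialize (HWmax' j Hj).
  assert (W j * K * exp (- mu * t) <= Wmax * K * exp (- mu * t))
    by (apply Rmult_le_compat_r; [left; apply exp_pos| nra]).
  pose proof (exp_decay_lt (Wmax * K) mu eps t ltac:(nra) Hmu Heps Ht). lra.
Qed.

Lemma V0_unstable (r : nat) (alpha : nat -> R) (m z c : R) :
  (1 <= r)%nat -> (forall i, (i < r)%nat -> 0 < alpha i) -> 1 <= m -> z <> 0 ->
  hfun m z = phi r alpha -> is_derive (fhill m) z c -> phi r alpha < c ->
  unstable r alpha m (fun j => z * V0 r alpha j).
Proof.
  intros Hr Halpha Hm Hz Hh Hd Hcphi Hstable.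
  assert (Hphi : 0 < phi r alpha) by (apply prodR_pos; intros; apply Halpha; lia).
  set (c' := (c + phi r alpha) / 2).
  destruct (is_derive_increment_ge (fhill m) z c c' Hd ltac:(unfold c'; lra)) as [eta [Heta Hf]].
  destruct (exists_rate_shift_up alpha r c' ltac:(unfold c', phi in *; lra)) as [mu [Hmu Hprod]].
  set (a := fun i => alpha i + mu) in Hprod.
  assert (Ha : forall i, (i < r)%nat -> 0 < a i) by (intros i Hi; specialize (Halpha i Hi); unfold a; lra).
  set (W := cascade_weight a).
  destruct (exists_upper_bound W r) as [Wmax [HWmax HWmax']].
  destruct (Hstable eta Heta) as [delta [Hdelta Hclose]].
  set (K := delta / (4 * Wmax)).
  assert (HK : 0 < K) by (apply Rdiv_lt_0_compat; lra).
  destruct (is_solution_exists r alpha m (fun j => z * V0 r alpha j + 2 * W j * K) Hr Hm)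
    as [x [Hx Hx0]].
  assert (H0 : forall j, (j < r)%nat -> x 0 j - z * V0 r alpha j = 2 * W j * K)
    by (intros j Hj; rewrite Hx0 by exact Hj; ring).
  assert (Hnear : forall t, 0 <= t -> forall j, (j < r)%nat -> Rabs (x t j - z * V0 r alpha j) < eta).
  { apply Hclose; [exact Hx|]. intros j Hj. rewrite H0 by exact Hj.
    assert (HW : 0 < W j) by (eapply cascade_weight_pos; eauto).
    specialize (HWmax' j Hj). rewrite Rabs_right by nra.
    assert (Wmax * K = delta / 4) by (unfold K; field; lra). nra. }
  set (t := eta / (K * mu)).
  assert (Ht : 0 <= t) by (apply Rdiv_le_0_compat; nra).
  assert (Hgrow : W 0%nat * K * exp (mu * t) < x t 0%nat - z * V0 r alpha 0).
  { apply (is_cascade_exp_growth r alpha a (fun u => fhill m (z + u) - fhill m z)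
      (fun t j => x t j - z * V0 r alpha j) c' eta mu K); auto; try lia.
    - unfold c'. lra.
    - intros i _. unfold a. ring.
    - apply is_solution_deviation_cascade; auto.
    - intros s j Hs Hj. specialize (Hnear s Hs j Hj). apply Rabs_def2 in Hnear. lra.
    - intros j Hj. rewrite H0 by exact Hj. fold W.
      assert (0 < W j) by (eapply cascade_weight_pos; eauto). nra. }
  specialize (Hnear t Ht 0%nat ltac:(lia)). apply Rabs_def2 in Hnear.
  unfold W in Hgrow. rewrite cascade_weight_0, Rmult_1_l in Hgrow.
  pose proof (exp_ineq1_le (mu * t)).
  assert (K * (mu * t) = eta) by (unfold t; field; lra).
  nra.
Qed.

Theorem lemma6p2 (r : nat) (alpha : nat -> R) (m z : R) :
  (2 <= r)%nat ->
  (forall i, (i < r)%nat -> 0 < alpha i) ->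
  1 <= m ->
  z <> 0 ->
  hfun m z = phi r alpha ->
  (0 < z ->
     (forall d, is_derive (hfun m) z d -> d < 0 ->
        asymp_stable r alpha m (fun j => z * V0 r alpha j)) /\
     (forall d, is_derive (hfun m) z d -> 0 < d ->
        unstable r alpha m (fun j => z * V0 r alpha j))) /\
  (z < 0 ->
     (forall d, is_derive (hfun m) z d -> 0 < d ->
        asymp_stable r alpha m (fun j => z * V0 r alpha j)) /\
     (forall d, is_derive (hfun m) z d -> d < 0 ->
        unstable r alpha m (fun j => z * V0 r alpha j))).
Proof.
  intros Hr Halpha Hm Hz Hh.
  assert (Hr1 : (1 <= r)%nat) by lia.
  assert (Hc : forall d, is_derive (hfun m) z d ->
     is_derive (fhill m) z (phi r alpha + z * d) /\ 0 <= phi r alpha + z * d).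
  { intros d Hd. assert (H := is_derive_fhill m z d Hz Hd). rewrite Hh in H. split; [exact H|].
    apply (is_derive_ge0_of_right_nondecreasing (fhill m) z _ H), fhill_nondecreasing_right; auto. }
  split; intros Hs; split; intros d Hd Hsd; destruct (Hc d Hd) as [Hfd Hc0].
  - apply (V0_asymp_stable r alpha m z (phi r alpha + z * d)); auto. nra.
  - apply (V0_unstable r alpha m z (phi r alpha + z * d)); auto. nra.
  - apply (V0_asymp_stable r alpha m z (phi r alpha + z * d)); auto. nra.
  - apply (V0_unstable r alpha m z (phi r alpha + z * d)); auto. nra.
Qed.
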